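(* Let $0\le\gamma<1$ and let $f\in\mathcal{B}(\Omega_\gamma)$ have the expansion $f(z)=\sum_{n=0}^\infty a_n\left(z+\frac{\gamma}{1-\gamma}\right)^n$ in $\Omega_\gamma$. Define $$\mathcal{C}_f(\rho)=\sum_{n=0}^\infty \frac{1}{n+1}\left(\sum_{k=0}^n\frac{|a_k|}{(1-\gamma)^k}\right)\rho^n,\qquad \rho\in[0,1).$$ Then $$\mathcal{C}_f(\rho)\le \frac{1}{\rho}\log\frac{1}{1-\rho}\qquad\text{for all }\rho\in(0,\rho_0],$$ where $\rho_0\approx 0.533589$ is the unique root in $(0,1)$ of the equation $3(1-\rho)\log(1-\rho)+2\rho=0$. The number $\rho_0$ is best possible: for every $\gamma\in[0,1)$ and every $\rho\in(\rho_0,1)$ there exists $f\in\mathcal{B}(\Omega_\gamma)$ with $\mathcal{C}_f(\rho)>\frac{1}{\rho}\log\frac{1}{1-\rho}$.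
   Context: For $\gamma\in[0,1)$, $\Omega_\gamma=\left\{z\in\mathbb{C}:\left|z+\frac{\gamma}{1-\gamma}\right|<\frac{1}{1-\gamma}\right\}$, the open disk with center $-\frac{\gamma}{1-\gamma}$ and radius $\frac{1}{1-\gamma}$. It contains the unit disk $\mathbb{D}$. The class $\mathcal{B}(\Omega_\gamma)$ consists of all analytic functions $f$ on $\Omega_\gamma$ with $f(\Omega_\gamma)\subseteq\overline{\mathbb{D}}$, that is, $|f|\le 1$ on $\Omega_\gamma$. The map $z\mapsto\gamma+(1-\gamma)z$ sends $\Omega_\gamma$ onto $\mathbb{D}$, and the parameter $\rho$ plays the role of $|\gamma+(1-\gamma)z|$. Since $\Omega_\gamma$ is a disk centered at $-\frac{\gamma}{1-\gamma}$, the Taylor expansion of $f$ about that center converges in all of $\Omega_\gamma$. *)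

From Stdlib Require Import Reals.
From Coquelicot Require Export Coquelicot.
Open Scope R_scope.

Definition Omega (gamma : R) (z : C) : Prop :=
  Cmod (Cplus z (RtoC (gamma / (1 - gamma)))) < 1 / (1 - gamma).

Definition in_B (gamma : R) (f : C -> C) : Prop :=
  (forall z, Omega gamma z -> ex_derive (K := C_AbsRing) (V := C_NormedModule) f z) /\
  (forall z, Omega gamma z -> Cmod (f z) <= 1).

Definition has_expansion (gamma : R) (f : C -> C) (a : nat -> C) : Prop :=
  forall z, Omega gamma z ->
    is_series (V := C_NormedModule)
      (fun n => Cmult (a n) (pow_n (K := C_Ring) (Cplus z (RtoC (gamma / (1 - gamma)))) n))
      (f z).

Definition Cf_term (gamma : R) (a : nat -> C) (rho : R) (n : nat) : R :=
  / INR (n + 1) * sum_f_R0 (fun k => Cmod (a k) / (1 - gamma) ^ k) n * rho ^ n.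

Definition Cf (gamma : R) (a : nat -> C) (rho : R) : R :=
  Series (Cf_term gamma a rho).

Definition log_bound (rho : R) : R := / rho * ln (/ (1 - rho)).

(* Substituting z + gamma/(1-gamma) = w/(1-gamma) turns f into g(w) = sum_n b_n w^n with
   |g| <= 1 on the unit disk and b_n = a_n/(1-gamma)^n, so C_f only sees the scaled
   coefficients |b_n|.  The classical inequality |b_k| <= 2 (1 - |b_0|) (k >= 1) bounds the
   partial sums by |b_0| + 2n (1 - |b_0|); summing gives
     C_f(rho) <= |b_0| L + 2 (1 - |b_0|) (1/(1-rho) - L),   L = (1/rho) log (1/(1-rho)),
   which is at most L iff 2/(1-rho) <= 3 L, i.e. iff 3(1-rho)log(1-rho)/rho + 2 <= 0.  That
   function is increasing, so this holds exactly for rho <= rho0.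
   The coefficient inequality comes from averaging Re (v g(r e^{it})) <= 1 against the
   nonnegative kernel 1 + cos (k t + phi) over N equally spaced points; the aliasing error is
   geometric in N, and then r -> 1.
   For sharpness take g the Blaschke factor (c - w)/(1 - c w): its partial sums are
   c + (1+c)(1-c^n), and with d = 1 - c its C_f exceeds L by d (2/(1-rho) - 3L) + O(d^2),
   which is positive for small d as soon as rho > rho0. *)

From Stdlib Require Import Reals Lra Lia Psatz ZArith.
From Coquelicot Require Import Coquelicot.
Open Scope R_scope.

(** * The logarithmic series *)

Definition log_coef (n : nat) : R := match n with O => 0 | S m => / INR (S m) end.

Lemma PS_derive_log_coef n : PS_derive log_coef n = 1.
Proof. unfold PS_derive, log_coef. field. apply not_0_INR; lia. Qed.

Lemma CV_radius_const_1 : CV_radius (fun _ => 1) = 1.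
Proof.
  rewrite (CV_radius_finite_DAlembert _ 1); [simpl; f_equal; lra | intros; lra | lra |].
  eapply is_lim_seq_ext; [|apply is_lim_seq_const].
  intros n; simpl. rewrite Rdiv_1_l, Rinv_1, Rabs_R1. reflexivity.
Qed.

Lemma CV_radius_log_coef : CV_radius log_coef = 1.
Proof.
  rewrite <- CV_radius_derive, (CV_radius_ext _ (fun _ => 1)) by apply PS_derive_log_coef.
  exact CV_radius_const_1.
Qed.

Lemma is_derive_PSeries_log_coef x :
  -1 < x < 1 -> is_derive (PSeries log_coef) x (/ (1 - x)).
Proof.
  intros Hx.
  assert (Hr : Rabs x < 1) by (apply Rabs_def1; lra).
  assert (H := is_derive_PSeries log_coef x).
  rewrite CV_radius_log_coef in H. specialize (H Hr).
  replace (/ (1 - x)) with (PSeries (PS_derive log_coef) x); [exact H|].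
  rewrite (PSeries_ext _ (fun _ => 1)) by apply PS_derive_log_coef.
  apply is_series_unique.
  eapply is_series_ext; [|apply (is_series_geom x Hr)].
  intros n; simpl. ring.
Qed.

Lemma PSeries_log_coef x : 0 <= x < 1 -> PSeries log_coef x = - ln (1 - x).
Proof.
  intros Hx.
  set (G := fun t => PSeries log_coef t + ln (1 - t)).
  enough (G 0 = G x) as E.
  { unfold G in E. rewrite PSeries_0, Rminus_0_r, ln_1 in E. simpl in E. lra. }
  destruct (Req_dec x 0) as [->|Hx0]; [reflexivity|].
  apply eq_is_derive; [|lra].
  intros t Ht. unfold G.
  replace (@zero R_NormedModule) with (/ (1 - t) + (-1) * / (1 - t))
    by (simpl; unfold zero; simpl; ring).
  apply (is_derive_plus (V := R_NormedModule)).
  - apply is_derive_PSeries_log_coef; lra.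
  - auto_derive; [lra | field; lra].
Qed.

Lemma log_bound_eq rho : 0 < rho < 1 -> log_bound rho = - ln (1 - rho) / rho.
Proof. intros H. unfold log_bound. rewrite ln_Rinv by lra. field. lra. Qed.

Lemma is_series_log_bound rho :
  0 < rho < 1 -> is_series (fun n => rho ^ n / INR (n + 1)) (log_bound rho).
Proof.
  intros Hr.
  assert (H : is_series (fun n => log_coef n * rho ^ n) (- ln (1 - rho))).
  { rewrite <- PSeries_log_coef by lra.
    eapply is_series_ext; [|apply PSeries_correct, CV_radius_inside].
    - intros n. unfold scal; simpl; unfold mult; simpl. rewrite pow_n_pow. ring.
    - rewrite CV_radius_log_coef. simpl. rewrite Rabs_pos_eq; lra. }
  rewrite <- (Rplus_0_r (- ln (1 - rho))), <- (Rmult_0_l (rho ^ 0)) in H.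
  apply (is_series_incr_1 (fun n => log_coef n * rho ^ n)), (is_series_scal_l (/ rho)) in H.
  rewrite log_bound_eq by lra.
  replace (- ln (1 - rho) / rho) with (/ rho * - ln (1 - rho)) by (field; lra).
  eapply is_series_ext; [|exact H].
  intros n. rewrite Nat.add_1_r. change (scal ?a ?b) with (a * b). cbn [log_coef pow].
  change (@eq _ ?u ?v) with (@eq R u v). field.
  split; [apply not_0_INR; lia | lra].
Qed.

Lemma ex_series_succ_mul_pow rho : 0 <= rho < 1 -> ex_series (fun n => INR (n + 1) * rho ^ n).
Proof.
  intros Hr.
  assert (He : ex_pseries (PS_derive (fun _ : nat => 1)) rho).
  { apply CV_radius_inside. rewrite CV_radius_derive, CV_radius_const_1.
    simpl. rewrite Rabs_pos_eq; lra. }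
  destruct He as [l Hl]. exists l.
  eapply is_series_ext; [|exact Hl].
  intros n. unfold PS_derive. rewrite pow_n_pow, Nat.add_1_r.
  unfold scal; simpl; unfold mult; simpl. ring.
Qed.

(** * Averages of trigonometric sums over roots of unity *)

Definition harmonic (x y w t : R) : R := x * cos (w * t) - y * sin (w * t).

Lemma harmonic_0 x y t : harmonic x y 0 t = x.
Proof. unfold harmonic. rewrite Rmult_0_l, cos_0, sin_0. ring. Qed.

Lemma harmonic_mul x y X Y v w t :
  harmonic x y v t * harmonic X Y w t =
  / 2 * (harmonic (x * X - y * Y) (x * Y + y * X) (v + w) t
         + harmonic (x * X + y * Y) (y * X - x * Y) (v - w) t).
Proof.
  unfold harmonic.
  replace ((v + w) * t) with (v * t + w * t) by ring.
  replace ((v - w) * t) with (v * t - w * t) by ring.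
  rewrite cos_plus, sin_plus, cos_minus, sin_minus. field.
Qed.

Lemma Rabs_harmonic_le x y w t : Rabs (harmonic x y w t) <= sqrt (x ^ 2 + y ^ 2).
Proof.
  unfold harmonic. set (c := cos (w * t)). set (s := sin (w * t)).
  assert (Hcs : c ^ 2 + s ^ 2 = 1)
    by (pose proof (sin2_cos2 (w * t)); unfold Rsqr in *; fold c s in H; lra).
  rewrite <- sqrt_pow2 with (x := Rabs _) by apply Rabs_pos.
  apply sqrt_le_1_alt. rewrite pow2_abs.
  pose proof (pow2_ge_0 (x * s + y * c)). nra.
Qed.

Lemma sum_cos_arith x psi n :
  2 * sin (x / 2) * sum_f_R0 (fun j => cos (INR j * x + psi)) n
  = sin ((INR n + / 2) * x + psi) - sin (psi - x / 2).
Proof.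
  assert (Hprod : forall a, 2 * sin (x / 2) * cos a = sin (a + x / 2) - sin (a - x / 2))
    by (intros a; rewrite sin_plus, sin_minus; ring).
  induction n as [|n IHn].
  - simpl sum_f_R0. rewrite Hprod. simpl INR. f_equal; f_equal; field.
  - rewrite tech5, Rmult_plus_distr_l, IHn, Hprod, S_INR.
    replace ((INR n + 1) * x + psi - x / 2) with ((INR n + / 2) * x + psi) by field.
    replace ((INR n + 1) * x + psi + x / 2) with ((INR n + 1 + / 2) * x + psi) by field.
    ring.
Qed.

Definition root_angle (N j : nat) : R := INR j * (2 * PI / INR (S N)).

Lemma sum_cos_roots N (m : Z) psi : (0 < Z.abs m < Z.of_nat (S N))%Z ->
  sum_f_R0 (fun j => cos (IZR m * root_angle N j + psi)) N = 0.
Proof.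
  intros Hm.
  assert (HN : 0 < INR (S N)) by (apply lt_0_INR; lia).
  assert (HPI := PI_RGT_0).
  set (x := IZR m * (2 * PI / INR (S N))).
  assert (Hsin : sin (x / 2) <> 0).
  { intros Hs. apply sin_eq_0_0 in Hs as [k Hk].
    assert (Hmk : m = (k * Z.of_nat (S N))%Z).
    { apply eq_IZR. rewrite mult_IZR, <- INR_IZR_INZ.
      apply (Rmult_eq_reg_r (PI / INR (S N))); [|apply Rgt_not_eq, Rdiv_lt_0_compat; lra].
      unfold x in Hk.
      replace (IZR m * (PI / INR (S N))) with (IZR m * (2 * PI / INR (S N)) / 2) by (field; lra).
      rewrite Hk. field. lra. }
    subst m. rewrite Z.abs_mul, (Z.abs_eq (Z.of_nat _)) in Hm by lia.
    destruct (Z.eq_dec (Z.abs k) 0) as [E|E];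
      [rewrite E in Hm | pose proof (Z.abs_nonneg k)]; nia. }
  rewrite (sum_eq _ (fun j => cos (INR j * x + psi)))
    by (intros j _; unfold root_angle, x; f_equal; ring).
  apply (Rmult_eq_reg_l (2 * sin (x / 2))); [|lra].
  rewrite sum_cos_arith, Rmult_0_r.
  replace ((INR N + / 2) * x + psi) with ((psi - x / 2) + 2 * (IZR m * PI))
    by (unfold x; rewrite S_INR in *; field; lra).
  rewrite form4, (sin_eq_0_1 (_ / 2)) by (exists m; field). ring.
Qed.

Lemma sum_harmonic_roots N x y (m : Z) : (0 < Z.abs m < Z.of_nat (S N))%Z ->
  sum_f_R0 (fun j => harmonic x y (IZR m) (root_angle N j)) N = 0.
Proof.
  intros Hm.
  rewrite (sum_eq _ (fun j => cos (IZR m * root_angle N j + 0) * x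
                             + cos (IZR m * root_angle N j + PI / 2) * y)).
  - rewrite plus_sum, <- !scal_sum, !sum_cos_roots by exact Hm. ring.
  - intros j _. unfold harmonic. rewrite Rplus_0_r, cos_plus, cos_PI2, sin_PI2. ring.
Qed.

Section Kernel.

Variables (N k : nat) (X Y : R).
Hypotheses (Hk : (1 <= k)%nat) (HkN : (2 * k <= N)%nat) (HXY : X ^ 2 + Y ^ 2 = 1).

Definition kernel (j : nat) : R := 1 + harmonic X Y (INR k) (root_angle N j).

Definition kernel_mean (x y : R) (n : nat) : R :=
  / INR (S N) * sum_f_R0 (fun j => kernel j * harmonic x y (INR n) (root_angle N j)) N.

Lemma kernel_bounds j : 0 <= kernel j <= 2.
Proof.
  unfold kernel. pose proof (Rabs_harmonic_le X Y (INR k) (root_angle N j)) as H.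
  rewrite HXY, sqrt_1 in H. apply Rabs_le_between in H. lra.
Qed.

Let sum_harmonic x y w := sum_f_R0 (fun j => harmonic x y w (root_angle N j)) N.

Lemma kernel_mean_expand x y n : kernel_mean x y n =
  / INR (S N) * (sum_harmonic x y (INR n)
    + / 2 * (sum_harmonic (x * X - y * Y) (x * Y + y * X) (INR n + INR k)
             + sum_harmonic (x * X + y * Y) (y * X - x * Y) (INR n - INR k))).
Proof.
  unfold kernel_mean, sum_harmonic. f_equal.
  rewrite <- plus_sum, scal_sum, <- plus_sum. apply sum_eq. intros j _.
  unfold kernel. rewrite Rmult_plus_distr_r, (Rmult_comm (harmonic X Y _ _)), harmonic_mul. ring.
Qed.

Lemma sum_harmonic_vanish x y w (m : Z) :
  w = IZR m -> (0 < Z.abs m < Z.of_nat (S N))%Z -> sum_harmonic x y w = 0.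
Proof. intros -> Hm. exact (sum_harmonic_roots N x y m Hm). Qed.

Lemma sum_harmonic_0 x y : sum_harmonic x y 0 = INR (S N) * x.
Proof.
  unfold sum_harmonic. rewrite (sum_eq _ (fun _ => x)) by (intros; apply harmonic_0).
  rewrite sum_cte. ring.
Qed.

Local Ltac vanish m := rewrite (sum_harmonic_vanish _ _ _ m);
  [| rewrite ?plus_IZR, ?minus_IZR, ?opp_IZR, <- ?INR_IZR_INZ; simpl; ring | lia].

Lemma kernel_mean_0 x y : kernel_mean x y 0 = x.
Proof.
  rewrite kernel_mean_expand, Rplus_0_l, Rminus_0_l, sum_harmonic_0.
  vanish (Z.of_nat k). vanish (- Z.of_nat k)%Z.
  field. apply not_0_INR. lia.
Qed.

Lemma kernel_mean_k x y : kernel_mean x y k = (x * X + y * Y) / 2.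
Proof.
  rewrite kernel_mean_expand, Rminus_diag, sum_harmonic_0.
  vanish (Z.of_nat k). vanish (Z.of_nat k + Z.of_nat k)%Z.
  field. apply not_0_INR. lia.
Qed.

Lemma kernel_mean_other x y n :
  (1 <= n)%nat -> n <> k -> (n + k <= N)%nat -> kernel_mean x y n = 0.
Proof.
  intros Hn Hnk HnN.
  rewrite kernel_mean_expand.
  vanish (Z.of_nat n). vanish (Z.of_nat n + Z.of_nat k)%Z. vanish (Z.of_nat n - Z.of_nat k)%Z.
  ring.
Qed.

Lemma Rabs_kernel_mean_le x y n : Rabs (kernel_mean x y n) <= 2 * sqrt (x ^ 2 + y ^ 2).
Proof.
  assert (HN : 0 < INR (S N)) by (apply lt_0_INR; lia).
  unfold kernel_mean. rewrite Rabs_mult, Rabs_inv, (Rabs_pos_eq (INR _)) by lra.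
  apply (Rmult_le_reg_l (INR (S N))); [lra|].
  rewrite <- Rmult_assoc, Rinv_r, Rmult_1_l by lra.
  eapply Rle_trans; [apply sum_f_R0_triangle|].
  eapply Rle_trans; [apply (sum_Rle _ (fun _ => 2 * sqrt (x ^ 2 + y ^ 2)))|].
  - intros j _. rewrite Rabs_mult.
    pose proof (kernel_bounds j). pose proof (Rabs_harmonic_le x y (INR n) (root_angle N j)).
    rewrite Rabs_pos_eq by lra. apply Rmult_le_compat; try lra; apply Rabs_pos.
  - rewrite sum_cte. lra.
Qed.

Lemma kernel_average : / INR (S N) * sum_f_R0 kernel N = 1.
Proof.
  rewrite <- (kernel_mean_0 1 0). unfold kernel_mean. f_equal.
  apply sum_eq. intros j _. simpl INR. rewrite harmonic_0. ring.
Qed.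

End Kernel.

Lemma le_0_of_le_geom (D G q : R) (n0 : nat) :
  Rabs q < 1 -> (forall n, (n0 <= n)%nat -> D <= G * q ^ n) -> D <= 0.
Proof.
  intros Hq H.
  assert (Hlim : is_lim_seq (fun n => G * q ^ n) 0).
  { replace (Finite 0) with (Rbar_mult G 0) by (simpl; f_equal; ring).
    apply is_lim_seq_scal_l, is_lim_seq_geom, Hq. }
  exact (is_lim_seq_le_loc (fun _ => D) _ D 0 (ex_intro _ n0 H) (is_lim_seq_const D) Hlim).
Qed.

Lemma bernoulli_ineq_sub d k : 0 <= d <= 1 -> 1 - INR k * d <= (1 - d) ^ k.
Proof.
  intros Hd. induction k as [|k IHk]; [simpl; lra|].
  rewrite S_INR. simpl pow. pose proof (pos_INR k). nra.
Qed.

Lemma le_1_of_forall_pow_le (A Z : R) (k : nat) :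
  0 <= Z -> (forall r, 0 < r < 1 -> A + r ^ k * Z <= 1) -> A + Z <= 1.
Proof.
  intros HZ H.
  enough (A + Z - 1 <= 0) by lra.
  apply (le_0_of_le_geom _ (INR k * Z / 2) (1 / 2) 0); [rewrite Rabs_pos_eq; lra|].
  intros n _.
  assert (Hd : 0 < (1 / 2) ^ S n < 1).
  { split; [apply pow_lt; lra | apply pow_lt_1_compat; [lra | lia]]. }
  specialize (H (1 - (1 / 2) ^ S n) ltac:(lra)).
  pose proof (bernoulli_ineq_sub ((1 / 2) ^ S n) k ltac:(lra)).
  simpl pow in *. nra.
Qed.

Lemma is_series_sum_f_R0 (u : nat -> nat -> R) (l : nat -> R) J :
  (forall j, (j <= J)%nat -> is_series (u j) (l j)) ->
  is_series (fun n => sum_f_R0 (fun j => u j n) J) (sum_f_R0 l J).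
Proof.
  induction J as [|J IHJ]; intros H; [apply H; lia|].
  apply (is_series_plus (V := R_NormedModule)); [apply IHJ; intros; apply H; lia | apply H; lia].
Qed.

Lemma is_series_zero : is_series (fun _ => 0) 0.
Proof.
  apply (filterlim_ext (fun _ => 0)); [|apply filterlim_const].
  intros n. rewrite sum_n_const. ring.
Qed.

Lemma is_series_delta (k : nat) (c : R) : is_series (fun n => if Nat.eqb n k then c else 0) c.
Proof.
  revert c. induction k as [|k IHk]; intros c; apply is_series_decr_1.
  - match goal with |- is_series _ ?l =>
      replace l with 0 by (cbn; unfold plus, opp; simpl; ring) end.
    exact is_series_zero.
  - match goal with |- is_series _ ?l =>
      replace l with c by (cbn; unfold plus, opp; simpl; ring) end.
    apply IHk.
Qed.

Lemma is_series_le (u v : nat -> R) (lu lv : R) :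
  (forall n, u n <= v n) -> is_series u lu -> is_series v lv -> lu <= lv.
Proof.
  intros Huv Hu Hv.
  apply (is_lim_seq_le (sum_n u) (sum_n v) lu lv); [|exact Hu | exact Hv].
  intros n. rewrite !sum_n_Reals. apply sum_Rle. intros k _. apply Huv.
Qed.

Lemma Rabs_series_le_geom (u : nat -> R) (l G s : R) :
  0 <= s < 1 -> (forall n, Rabs (u n) <= G * s ^ n) -> is_series u l -> Rabs l <= G / (1 - s).
Proof.
  intros Hs Hu Hl.
  assert (Hgeo : is_series (fun n => G * s ^ n) (G / (1 - s))).
  { apply (is_series_scal_l G (fun n => s ^ n) (/ (1 - s))), is_series_geom.
    rewrite Rabs_pos_eq; lra. }
  assert (Hex : ex_series (fun n => Rabs (u n))).
  { apply (ex_series_le (K := R_AbsRing) (V := R_CompleteNormedModule) _ (fun n => G * s ^ n));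
      [|eexists; exact Hgeo].
    intros n. change (norm ?x) with (Rabs x). rewrite Rabs_Rabsolu. apply Hu. }
  rewrite <- (is_series_unique _ _ Hl), <- (is_series_unique _ _ Hgeo).
  eapply Rle_trans; [apply Series_Rabs, Hex|].
  apply Series_le; [intros n; split; [apply Rabs_pos | apply Hu] | eexists; exact Hgeo].
Qed.

(** * The coefficient inequality *)

Section RealCoefficientBound.

Variables (x y : nat -> R) (rho q C : R).
Hypotheses (Hrho : 0 <= rho) (Hq : 0 < q < 1)
  (Hdom : forall n, rho ^ n * sqrt (x n ^ 2 + y n ^ 2) <= C * q ^ n)
  (Hser : forall t, ex_series (fun n => rho ^ n * harmonic (x n) (y n) (INR n) t))
  (Hle1 : forall t, Series (fun n => rho ^ n * harmonic (x n) (y n) (INR n) t) <= 1).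
Variables (k : nat) (X Y : R).
Hypotheses (Hk : (1 <= k)%nat) (HXY : X ^ 2 + Y ^ 2 = 1).

Let T N n := kernel_mean N k X Y (x n) (y n) n.

Lemma is_series_kernel_average N : (2 * k <= N)%nat ->
  exists S, is_series (fun n => rho ^ n * T N n) S /\ S <= 1.
Proof.
  intros HkN.
  assert (HN : 0 < INR (S N)) by (apply lt_0_INR; lia).
  set (w j := kernel N k X Y j / INR (S N)).
  set (h j n := rho ^ n * harmonic (x n) (y n) (INR n) (root_angle N j)).
  exists (sum_f_R0 (fun j => w j * Series (h j)) N). split.
  - eapply is_series_ext; [|apply (is_series_sum_f_R0 (fun j n => w j * h j n))].
    + intros n. unfold T, kernel_mean. rewrite !scal_sum. apply sum_eq. intros j _.
      unfold w, h. field. lra.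
    + intros j _. apply (is_series_scal_l (V := R_NormedModule)), Series_correct, Hser.
  - apply Rle_trans with (sum_f_R0 w N).
    + apply sum_Rle. intros j _. specialize (Hle1 (root_angle N j)).
      assert (0 <= w j) by (apply Rdiv_le_0_compat; [apply (kernel_bounds N k)|]; auto; lra).
      fold (h j) in Hle1. nra.
    + right. rewrite <- (kernel_average N k X Y Hk HkN) at 1. rewrite scal_sum.
      apply sum_eq. intros j _. unfold w. field. lra.
Qed.

(* The exact value of [rho ^ n * T N n] for [n <= N - k]: only [n = 0] and [n = k] survive. *)
Let peak n := (if Nat.eqb n 0 then x 0%nat else 0)
  + (if Nat.eqb n k then rho ^ k * (x k * X + y k * Y) / 2 else 0).

Lemma kernel_average_term_error N n : (2 * k <= N)%nat ->
  Rabs (rho ^ n * T N n - peak n) <= 2 * C * sqrt q ^ (N - k) * sqrt q ^ n.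
Proof.
  intros HkN.
  set (s := sqrt q).
  assert (Hs : 0 < s < 1).
  { unfold s. rewrite <- sqrt_1. split; [apply sqrt_lt_R0 | apply sqrt_lt_1_alt]; lra. }
  assert (HC : 0 <= C).
  { specialize (Hdom 0%nat). rewrite !pow_O in Hdom.
    pose proof (sqrt_pos (x 0%nat ^ 2 + y 0%nat ^ 2)). lra. }
  assert (Hsn : forall m, 0 <= s ^ m) by (intros; apply pow_le; lra).
  unfold peak, T.
  destruct (le_lt_dec n (N - k)) as [Hn|Hn].
  - enough (rho ^ n * kernel_mean N k X Y (x n) (y n) n
            = (if Nat.eqb n 0 then x 0%nat else 0)
              + (if Nat.eqb n k then rho ^ k * (x k * X + y k * Y) / 2 else 0)) as ->.
    { rewrite Rminus_diag, Rabs_R0. pose proof (Hsn (N - k)%nat). pose proof (Hsn n).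
      apply Rmult_le_pos; [|lra]. apply Rmult_le_pos; lra. }
    destruct (Nat.eqb_spec n 0) as [->|Hn0].
    + rewrite (proj2 (Nat.eqb_neq 0 k)) by lia. rewrite kernel_mean_0 by lia. cbv iota. ring.
    + destruct (Nat.eqb_spec n k) as [->|Hnk].
      * rewrite kernel_mean_k by lia. cbv iota. lra.
      * rewrite kernel_mean_other by lia. cbv iota. ring.
  - rewrite (proj2 (Nat.eqb_neq n 0)), (proj2 (Nat.eqb_neq n k)) by lia.
    rewrite Rplus_0_r, Rminus_0_r, Rabs_mult, (Rabs_pos_eq (rho ^ n)) by (apply pow_le; lra).
    eapply Rle_trans;
      [apply Rmult_le_compat_l; [apply pow_le; lra | apply Rabs_kernel_mean_le; auto]|].
    (* splitting [q ^ n = s ^ n * s ^ n] leaves a summable error of total size O(s^(N-k)) *)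
    assert (Hqn : q ^ n <= s ^ (N - k) * s ^ n).
    { replace q with (s * s) by (apply sqrt_sqrt; lra). rewrite Rpow_mult_distr.
      apply Rmult_le_compat_r; [apply Hsn|].
      replace n with ((N - k) + (n - (N - k)))%nat at 1 by lia. rewrite pow_add.
      pose proof (pow_incr s 1 (n - (N - k)) ltac:(lra)) as H1. rewrite pow1 in H1.
      specialize (Hsn (N - k)%nat). nra. }
    assert (C * q ^ n <= C * (s ^ (N - k) * s ^ n)) by (apply Rmult_le_compat_l; lra).
    specialize (Hdom n). lra.
Qed.

Lemma kernel_average_error N : (2 * k <= N)%nat ->
  x 0%nat + rho ^ k * (x k * X + y k * Y) / 2 - 1 <= 2 * C * sqrt q ^ (N - k) / (1 - sqrt q).
Proof.
  intros HkN.
  assert (Hs : 0 <= sqrt q < 1).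
  { rewrite <- sqrt_1. split; [apply sqrt_pos | apply sqrt_lt_1_alt; lra]. }
  destruct (is_series_kernel_average N HkN) as [S [HS HS1]].
  assert (Hpeak : is_series peak (x 0%nat + rho ^ k * (x k * X + y k * Y) / 2))
    by (apply (is_series_plus (V := R_NormedModule)); apply is_series_delta).
  assert (Herr := Rabs_series_le_geom _ _ _ _ Hs (fun n => kernel_average_term_error N n HkN)
                    (is_series_minus _ _ _ _ HS Hpeak)).
  pose proof (Rle_abs (- (S - (x 0%nat + rho ^ k * (x k * X + y k * Y) / 2)))).
  rewrite Rabs_Ropp in *. change (plus ?a (opp ?b)) with (a - b) in Herr. lra.
Qed.

Lemma real_coefficient_bound : x 0%nat + rho ^ k * (x k * X + y k * Y) / 2 <= 1.
Proof.
  assert (Hs : 0 <= sqrt q < 1).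
  { rewrite <- sqrt_1. split; [apply sqrt_pos | apply sqrt_lt_1_alt; lra]. }
  enough (x 0%nat + rho ^ k * (x k * X + y k * Y) / 2 - 1 <= 0) by lra.
  apply (le_0_of_le_geom _ (2 * C / (1 - sqrt q)) (sqrt q) k); [rewrite Rabs_pos_eq; lra|].
  intros n Hn. eapply Rle_trans; [apply (kernel_average_error (n + k)); lia|].
  replace (n + k - k)%nat with n by lia. right. field. lra.
Qed.

End RealCoefficientBound.

Lemma Cmod_eq_sqrt (z : C) : Cmod z = sqrt (Re z ^ 2 + Im z ^ 2).
Proof. reflexivity. Qed.

Lemma is_series_C_terms_bounded (u : nat -> C) (l : C) :
  is_series (V := C_NormedModule) u l -> exists M, forall n, Cmod (u n) <= M.
Proof.
  intros H. destruct (filterlim_bounded (sum_n u)) as [M HM]; [exists l; exact H|].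
  exists (2 * M). intros [|n].
  - specialize (HM 0%nat). rewrite sum_O in HM. pose proof (Cmod_ge_0 (u 0%nat)).
    change (norm ?z) with (Cmod z) in HM. lra.
  - replace (u (S n)) with (sum_n u (S n) - sum_n u n)%C
      by (rewrite sum_Sn; change plus with Cplus; ring).
    pose proof (HM (S n)) as H1. pose proof (HM n) as H2. change (norm ?z) with (Cmod z) in H1, H2.
    eapply Rle_trans; [apply Cmod_triangle|]. rewrite Cmod_opp. lra.
Qed.

Lemma is_series_Re (u : nat -> C) (l : C) :
  is_series (V := C_NormedModule) u l -> is_series (fun n => Re (u n)) (Re l).
Proof.
  intros H P [eps HP].
  assert (Hsum : forall n, Re (sum_n u n) = sum_n (fun k => Re (u k)) n).
  { induction n as [|n IHn]; [rewrite !sum_O | rewrite !sum_Sn, <- IHn]; reflexivity. }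
  assert (Hl : locally (T := C_UniformSpace) l (fun z => P (Re z))).
  { exists eps. intros z [Hz _]. apply HP. exact Hz. }
  destruct (H _ Hl) as [M HM]. exists M. intros n Hn.
  rewrite <- Hsum. exact (HM n Hn).
Qed.

Definition polar (r t : R) : C := (r * cos t, r * sin t).

Lemma pow_n_polar (r t : R) (n : nat) :
  pow_n (K := C_Ring) (polar r t) n = polar (r ^ n) (INR n * t).
Proof.
  unfold polar. induction n as [|n IHn].
  - change (pow_n (K := C_Ring) _ 0) with (RtoC 1). rewrite Rmult_0_l, cos_0, sin_0.
    unfold RtoC. simpl pow. f_equal; ring.
  - change (pow_n (K := C_Ring) (r * cos t, r * sin t) (S n))
      with (Cmult (r * cos t, r * sin t) (pow_n (K := C_Ring) (r * cos t, r * sin t) n)).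
    rewrite IHn, S_INR.
    replace ((INR n + 1) * t) with (INR n * t + t) by ring.
    rewrite cos_plus, sin_plus. unfold Cmult; simpl. f_equal; ring.
Qed.

Lemma Cmod_polar r t : Cmod (polar r t) = Rabs r.
Proof.
  unfold polar. rewrite Cmod_eq_sqrt. simpl Re. simpl Im.
  rewrite <- sqrt_Rsqr_abs, Rsqr_pow2. f_equal.
  pose proof (sin2_cos2 t). unfold Rsqr in *. nra.
Qed.

Lemma unit_rotation (z : C) : exists v : C, Cmod v = 1 /\ (v * z)%C = RtoC (Cmod z).
Proof.
  destruct (Req_dec (Cmod z) 0) as [H0|H0].
  - exists 1%C. split; [apply Cmod_1|]. apply Cmod_eq_0 in H0. rewrite H0, Cmod_0. ring.
  - exists (/ Cmod z * Cconj z)%C.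
    assert (Hz : RtoC (Cmod z) <> 0%C) by (intros E; apply H0; injection E; auto).
    split.
    + rewrite Cmod_mult, Cmod_conj, Cmod_inv, Cmod_R, Rabs_pos_eq by (apply Cmod_ge_0 || exact Hz).
      field. exact H0.
    + rewrite <- Cmult_assoc, (Cmult_comm (Cconj z)), <- Cmod2_conj, RtoC_pow.
      field. exact Hz.
Qed.

Lemma is_series_rotated_harmonic (a : nat -> C) (v l : C) (rho t : R) :
  is_series (V := C_NormedModule)
    (fun n => (a n * pow_n (K := C_Ring) (polar rho t) n)%C) l ->
  is_series (fun n => rho ^ n * harmonic (Re (v * a n)) (Im (v * a n)) (INR n) t) (Re (v * l)).
Proof.
  intros H. apply (is_series_scal_l (V := C_NormedModule) v), is_series_Re in H.
  eapply is_series_ext; [|exact H].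
  intros n. change (scal ?x ?y) with (Cmult x y).
  cbv beta. rewrite pow_n_polar, Cmult_assoc. unfold harmonic.
  destruct (v * a n)%C as [p q]. unfold polar. simpl. change (@eq _ ?u ?w) with (@eq R u w). ring.
Qed.

Lemma Cmod_coef_le_geom (a : nat -> C) (R0 r r' M : R) :
  0 < R0 -> 0 <= r < r' ->
  (forall n, Cmod (a n * pow_n (K := C_Ring) (polar (r' * R0) 0) n)%C <= M) ->
  forall n, (r * R0) ^ n * Cmod (a n) <= M * (r / r') ^ n.
Proof.
  intros HR0 Hr HM n. specialize (HM n).
  rewrite pow_n_polar, Cmod_mult, Cmod_polar, Rabs_pos_eq in HM by (apply pow_le; nra).
  replace (r * R0) with (r / r' * (r' * R0)) by (field; lra).
  rewrite Rpow_mult_distr, Rmult_assoc, (Rmult_comm M), (Rmult_comm (_ ^ n) (Cmod _)).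
  apply Rmult_le_compat_l; [apply pow_le, Rdiv_le_0_compat; lra | exact HM].
Qed.

Lemma coefficient_bound_disk (a : nat -> C) (R0 : R) (k : nat) :
  0 < R0 -> (1 <= k)%nat ->
  (forall r t, 0 <= r < 1 -> exists l : C,
     is_series (V := C_NormedModule)
       (fun n => (a n * pow_n (K := C_Ring) (polar (r * R0) t) n)%C) l
     /\ Cmod l <= 1) ->
  Cmod (a 0%nat) + R0 ^ k * Cmod (a k) / 2 <= 1.
Proof.
  intros HR0 Hk H.
  destruct (unit_rotation (a 0%nat)) as [v [Hv Hva0]].
  destruct (unit_rotation (v * a k)%C) as [w [Hw Hwak]].
  set (x n := Re (v * a n)%C). set (y n := Im (v * a n)%C).
  assert (Hxy : forall n, sqrt (x n ^ 2 + y n ^ 2) = Cmod (a n)).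
  { intros n. unfold x, y. rewrite <- Cmod_eq_sqrt, Cmod_mult, Hv. ring. }
  assert (Hak : Cmod (a k) = x k * Re w + y k * - Im w).
  { assert (E := f_equal Re Hwak). change (Re (RtoC ?u)) with u in E.
    rewrite Cmod_mult, Hv, Rmult_1_l in E.
    unfold x, y. rewrite <- E. destruct w, (v * a k)%C. simpl. ring. }
  apply (le_1_of_forall_pow_le _ _ k).
  { pose proof (Cmod_ge_0 (a k)). pose proof (pow_le R0 k). nra. }
  intros r Hr.
  set (r' := (1 + r) / 2).
  destruct (H r' 0 ltac:(unfold r'; lra)) as [l' [Hl' _]].
  destruct (is_series_C_terms_bounded _ _ Hl') as [M HM].
  replace (Cmod (a 0%nat)) with (x 0%nat) by (unfold x; rewrite Hva0; reflexivity).
  rewrite Hak.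
  replace (r ^ k * (R0 ^ k * (x k * Re w + y k * - Im w) / 2))
    with ((r * R0) ^ k * (x k * Re w + y k * - Im w) / 2) by (rewrite Rpow_mult_distr; field).
  apply (real_coefficient_bound x y (r * R0) (r / r') M); auto.
  - nra.
  - unfold r'. split; [apply Rdiv_lt_0_compat|apply Rlt_div_l]; lra.
  - intros n. rewrite Hxy. apply (Cmod_coef_le_geom a R0); unfold r'; auto; lra.
  - intros t. destruct (H r t ltac:(lra)) as [l [Hl _]].
    eexists. apply (is_series_rotated_harmonic _ v _ _ _ Hl).
  - intros t. destruct (H r t ltac:(lra)) as [l [Hl Hl1]].
    unfold x, y. rewrite (is_series_unique _ _ (is_series_rotated_harmonic _ v _ _ _ Hl)).
    eapply Rle_trans; [apply Rle_abs|]. eapply Rle_trans; [apply re_le_Cmod|].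
    rewrite Cmod_mult, Hv. lra.
  - replace 1 with (Cmod w ^ 2) by (rewrite Hw; ring).
    rewrite Cmod_eq_sqrt, pow2_sqrt by nra. ring.
Qed.

Lemma in_B_coefficient_bound (gamma : R) (f : C -> C) (a : nat -> C) (k : nat) :
  0 <= gamma < 1 -> in_B gamma f -> has_expansion gamma f a -> (1 <= k)%nat ->
  Cmod (a k) / (1 - gamma) ^ k <= 2 * (1 - Cmod (a 0%nat)).
Proof.
  intros Hg [_ Hf] Hexp Hk.
  assert (HR0 : 0 < / (1 - gamma)) by (apply Rinv_0_lt_compat; lra).
  enough (Cmod (a 0%nat) + (/ (1 - gamma)) ^ k * Cmod (a k) / 2 <= 1)
    by (rewrite pow_inv in H; unfold Rdiv in *; lra).
  apply coefficient_bound_disk; [exact HR0 | exact Hk|].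
  intros r t Hr.
  set (z := (polar (r * / (1 - gamma)) t - RtoC (gamma / (1 - gamma)))%C).
  assert (Hz : (z + RtoC (gamma / (1 - gamma)))%C = polar (r * / (1 - gamma)) t)
    by (unfold z; ring).
  assert (HO : Omega gamma z).
  { unfold Omega. rewrite Hz, Cmod_polar, Rabs_pos_eq by nra.
    apply Rlt_le_trans with (1 * / (1 - gamma)); [nra | right; field; lra]. }
  exists (f z). split; [rewrite <- Hz; apply Hexp, HO | apply Hf, HO].
Qed.

(** * The upper bound for rho <= rho0 *)

Definition critical (rho : R) : R := 3 * (1 - rho) * ln (1 - rho) / rho + 2.

Lemma ln_1_sub_lt x : 0 < x < 1 -> ln (1 - x) < - x.
Proof.
  intros Hx. rewrite <- (ln_exp (- x)). apply ln_increasing; [lra|].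
  pose proof (exp_ineq1 (- x) ltac:(lra)). lra.
Qed.

Lemma critical_increasing x y : 0 < x -> x < y -> y < 1 -> critical x < critical y.
Proof.
  intros Hx Hxy Hy.
  apply (incr_function critical 0 1 (fun t => 3 * (- ln (1 - t) - t) / t ^ 2)); simpl; try lra.
  - intros t Ht0 Ht1. unfold critical. auto_derive; [repeat split; lra | unfold Rminus; field; lra].
  - intros t Ht0 Ht1. apply Rlt_gt, Rdiv_lt_0_compat; [|nra].
    pose proof (ln_1_sub_lt t (conj Ht0 Ht1)). lra.
Qed.

Lemma log_bound_critical rho : 0 < rho < 1 ->
  3 * log_bound rho - 2 / (1 - rho) = - critical rho / (1 - rho).
Proof. intros Hr. rewrite log_bound_eq by lra. unfold critical. field. lra. Qed.

Lemma critical_root rho0 : 0 < rho0 ->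
  3 * (1 - rho0) * ln (1 - rho0) + 2 * rho0 = 0 -> critical rho0 = 0.
Proof.
  intros H0 Heq. unfold critical.
  replace (3 * (1 - rho0) * ln (1 - rho0)) with (- 2 * rho0) by lra. field. lra.
Qed.

Lemma sum_coefficients_le (u : nat -> R) (al : R) n :
  u 0%nat = al -> (forall k, (1 <= k)%nat -> u k <= 2 * (1 - al)) ->
  sum_f_R0 u n <= al + 2 * INR n * (1 - al).
Proof.
  intros Hu0 Hu. induction n as [|n IHn]; [simpl; lra|].
  rewrite tech5, S_INR. specialize (Hu (S n) ltac:(lia)). lra.
Qed.

Lemma Cf_le_of_coefficient_bound (gamma : R) (a : nat -> C) (rho : R) :
  0 <= gamma < 1 -> 0 < rho < 1 -> Cmod (a 0%nat) <= 1 ->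
  (forall k, (1 <= k)%nat -> Cmod (a k) / (1 - gamma) ^ k <= 2 * (1 - Cmod (a 0%nat))) ->
  ex_series (Cf_term gamma a rho) /\
  Cf gamma a rho <= Cmod (a 0%nat) * log_bound rho
                    + 2 * (1 - Cmod (a 0%nat)) * (/ (1 - rho) - log_bound rho).
Proof.
  intros Hg Hr Ha0 Hak.
  set (al := Cmod (a 0%nat)). set (L := log_bound rho).
  set (b n := al * (rho ^ n / INR (n + 1)) + 2 * (1 - al) * (rho ^ n - rho ^ n / INR (n + 1))).
  assert (Hb : is_series b (al * L + 2 * (1 - al) * (/ (1 - rho) - L))).
  { apply (is_series_plus (V := R_NormedModule)); apply (is_series_scal_l (V := R_NormedModule)).
    - apply is_series_log_bound, Hr.
    - apply (is_series_minus (V := R_NormedModule)); [|apply is_series_log_bound, Hr].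
      apply is_series_geom. rewrite Rabs_pos_eq; lra. }
  assert (Hterm : forall n, 0 <= Cf_term gamma a rho n <= b n).
  { intros n. unfold Cf_term.
    assert (Hn : 0 < INR (n + 1)) by (apply lt_0_INR; lia).
    assert (Hp : 0 < rho ^ n) by (apply pow_lt; lra).
    assert (Hsum := sum_coefficients_le (fun k => Cmod (a k) / (1 - gamma) ^ k) al n).
    assert (Hpos : 0 <= sum_f_R0 (fun k => Cmod (a k) / (1 - gamma) ^ k) n).
    { apply cond_pos_sum. intros k. apply Rdiv_le_0_compat; [apply Cmod_ge_0 | apply pow_lt; lra]. }
    specialize (Hsum ltac:(unfold al; simpl; field) Hak).
    replace (b n) with (/ INR (n + 1) * (al + 2 * INR n * (1 - al)) * rho ^ n)
      by (unfold b; rewrite plus_INR; simpl INR; pose proof (pos_INR n); field; lra).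
    assert (0 < / INR (n + 1)) by (apply Rinv_0_lt_compat; lra).
    split; [apply Rmult_le_pos; [apply Rmult_le_pos|]; lra|].
    apply Rmult_le_compat_r; [lra|]. apply Rmult_le_compat_l; lra. }
  assert (Hex : ex_series (Cf_term gamma a rho)).
  { apply (ex_series_le (K := R_AbsRing) (V := R_CompleteNormedModule) _ b); [|eexists; exact Hb].
    intros n. change (norm ?x) with (Rabs x). rewrite Rabs_pos_eq; apply Hterm. }
  split; [exact Hex|].
  unfold Cf. rewrite <- (is_series_unique _ _ Hb).
  apply Series_le; [exact Hterm | eexists; exact Hb].
Qed.

Lemma Cf_le_log_bound (gamma rho0 : R) (f : C -> C) (a : nat -> C) (rho : R) :
  0 <= gamma < 1 -> rho0 < 1 -> critical rho0 = 0 ->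
  in_B gamma f -> has_expansion gamma f a -> 0 < rho <= rho0 ->
  ex_series (Cf_term gamma a rho) /\ Cf gamma a rho <= log_bound rho.
Proof.
  intros Hg H1 Hc0 HB Hexp Hr.
  assert (Hcoef := fun k => in_B_coefficient_bound gamma f a k Hg HB Hexp).
  assert (Ha0 : Cmod (a 0%nat) <= 1).
  { specialize (Hcoef 1%nat (le_n 1)).
    assert (0 <= Cmod (a 1%nat) / (1 - gamma) ^ 1)
      by (apply Rdiv_le_0_compat; [apply Cmod_ge_0 | simpl; lra]).
    lra. }
  destruct (Cf_le_of_coefficient_bound gamma a rho Hg ltac:(lra) Ha0 Hcoef) as [Hex Hle].
  split; [exact Hex|].
  assert (Hcrit : critical rho <= 0).
  { destruct (Req_dec rho rho0) as [->|Hne]; [lra|].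
    pose proof (critical_increasing rho rho0 ltac:(lra) ltac:(lra) H1). lra. }
  pose proof (log_bound_critical rho ltac:(lra)) as E.
  assert (0 <= - critical rho / (1 - rho)) by (apply Rdiv_le_0_compat; lra).
  assert (0 <= 1 - Cmod (a 0%nat)) by lra.
  unfold Rdiv in *. nra.
Qed.

(** * Sharpness: Blaschke factors *)

(* Coquelicot's differentiation rules for products and compositions are stated for the
   normed module [AbsRing_NormedModule C_AbsRing], whose balls differ definitionally from
   those of [C_NormedModule] used in [in_B]; [ex_derive_C_NormedModule] transfers back. *)
Local Notation C_module := (AbsRing_NormedModule C_AbsRing).

Local Notation C_differentiable f z := (ex_derive (K := C_AbsRing) (V := C_module) f z).

Lemma ex_derive_C_NormedModule (f : C -> C) (z : C) :
  C_differentiable f z -> ex_derive (K := C_AbsRing) (V := C_NormedModule) f z.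
Proof.
  intros [l [_ Hl]]. exists l. split.
  - apply (is_linear_scal_l (K := C_AbsRing) (V := C_NormedModule)).
  - intros x Hx eps. exact (Hl x Hx eps).
Qed.

Lemma ex_derive_Cmult (f g : C -> C) (z : C) :
  C_differentiable f z -> C_differentiable g z -> C_differentiable (fun z => (f z * g z)%C) z.
Proof.
  intros [df Hf] [dg Hg]. eexists.
  exact (is_derive_mult (K := C_AbsRing) f g z df dg Hf Hg Cmult_comm).
Qed.

Lemma is_derive_Cinv (x : C) : x <> 0%C ->
  is_derive (K := C_AbsRing) (V := C_module) Cinv x (- / (x * x))%C.
Proof.
  intros Hx. split; [apply (is_linear_scal_l (K := C_AbsRing) (V := C_module))|].
  intros x0 Hx0.
  apply (is_filter_lim_locally_unique (K := C_AbsRing) (V := C_module)) in Hx0.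
  subst x0. intros eps.
  set (m := Cmod x).
  assert (Hm : 0 < m) by (apply Cmod_gt_0, Hx).
  assert (Heps := cond_pos eps).
  assert (Hd : 0 < Rmin (m / 2) (eps * m ^ 3 / 2))
    by (apply Rmin_pos; [lra | pose proof (pow_lt m 3 Hm); nra]).
  exists (mkposreal _ Hd). intros y Hy.
  change (Cmod (y - x)%C < Rmin (m / 2) (eps * m ^ 3 / 2)) in Hy.
  change (Cmod ((/ y - / x - (y - x) * - / (x * x))%C) <= eps * Cmod (y - x)%C).
  set (t := Cmod (y - x)%C) in *.
  assert (Ht : 0 <= t) by apply Cmod_ge_0.
  assert (Hty : m / 2 <= Cmod y).
  { pose proof (Cmod_triangle y (x - y)%C) as H.
    replace (y + (x - y))%C with x in H by ring.
    replace (x - y)%C with (- (y - x))%C in H by ring. rewrite Cmod_opp in H.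
    pose proof (Rmin_l (m / 2) (eps * m ^ 3 / 2)). fold m t in H. lra. }
  assert (Hy0 : y <> RtoC 0) by (intros E; rewrite E, Cmod_0 in Hty; lra).
  (* the remainder of the first-order expansion of [Cinv] is exactly quadratic *)
  replace ((/ y - / x - (y - x) * - / (x * x))%C) with ((y - x) * (y - x) / (x * x * y))%C
    by (field; auto).
  rewrite Cmod_div, !Cmod_mult by (repeat apply Cmult_neq_0; auto). fold m t.
  apply Rle_div_l; [apply Rmult_lt_0_compat; [nra | lra]|].
  pose proof (Rmin_r (m / 2) (eps * m ^ 3 / 2)).
  assert (t * t <= t * (eps * m ^ 3 / 2)) by (apply Rmult_le_compat_l; lra).
  assert (eps * t * (m ^ 3 / 2) <= eps * t * (m * m * Cmod y)).
  { apply Rmult_le_compat_l; [nra|]. simpl. nra. }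
  lra.
Qed.

Lemma ex_derive_Cinv (g : C -> C) (z : C) :
  C_differentiable g z -> g z <> 0%C -> C_differentiable (fun z => (/ g z)%C) z.
Proof.
  intros Hg Hz. apply (ex_derive_comp (K := C_AbsRing) (V := C_module) Cinv g); [|exact Hg].
  eexists. apply is_derive_Cinv, Hz.
Qed.

Definition disk_map (gamma : R) (z : C) : C :=
  (RtoC (1 - gamma) * (z + RtoC (gamma / (1 - gamma))))%C.

Definition blaschke (c : R) (w : C) : C := ((RtoC c - w) / (1 - RtoC c * w))%C.

Definition extremal (gamma c : R) (z : C) : C := blaschke c (disk_map gamma z).

Lemma ex_derive_disk_map gamma z : C_differentiable (disk_map gamma) z.
Proof.
  apply (ex_derive_Cmult (fun _ => _)); [apply ex_derive_const|].
  apply (ex_derive_plus (K := C_AbsRing) (V := C_module) (fun z => z) (fun _ => _));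
    [apply ex_derive_id | apply ex_derive_const].
Qed.

Lemma Cmod_disk_map gamma z : 0 <= gamma < 1 -> Omega gamma z -> Cmod (disk_map gamma z) < 1.
Proof.
  intros Hg HO. unfold Omega in HO. unfold disk_map.
  rewrite Cmod_mult, Cmod_R, Rabs_pos_eq by lra.
  apply (Rmult_lt_compat_l (1 - gamma)) in HO; [|lra].
  replace ((1 - gamma) * (1 / (1 - gamma))) with 1 in HO by (field; lra). exact HO.
Qed.

Lemma C_one_sub_neq_0 (q : C) : Cmod q < 1 -> (1 - q)%C <> 0%C.
Proof.
  intros Hq E. replace q with (1 - (1 - q))%C in Hq by ring. rewrite E in Hq.
  replace (RtoC 1 - RtoC 0)%C with (RtoC 1) in Hq by ring. rewrite Cmod_1 in Hq. lra.
Qed.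

Lemma Cmod_RtoC_mult_lt_1 (c : R) (w : C) : 0 <= c < 1 -> Cmod w < 1 -> Cmod (RtoC c * w)%C < 1.
Proof.
  intros Hc Hw. rewrite Cmod_mult, Cmod_R, Rabs_pos_eq by lra. pose proof (Cmod_ge_0 w). nra.
Qed.

Lemma Cmod_blaschke_le c w : 0 <= c < 1 -> Cmod w < 1 -> Cmod (blaschke c w) <= 1.
Proof.
  intros Hc Hw.
  assert (Hnz := C_one_sub_neq_0 _ (Cmod_RtoC_mult_lt_1 c w Hc Hw)).
  assert (Hpos : 0 < Cmod (1 - RtoC c * w)%C) by (apply Cmod_gt_0, Hnz).
  unfold blaschke. rewrite Cmod_div by exact Hnz.
  apply Rle_div_l; [exact Hpos|]. rewrite Rmult_1_l.
  assert (Hw2 : Re w ^ 2 + Im w ^ 2 < 1).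
  { rewrite <- (pow2_sqrt (Re w ^ 2 + Im w ^ 2)) by nra. rewrite <- Cmod_eq_sqrt.
    pose proof (Cmod_ge_0 w). nra. }
  rewrite !Cmod_eq_sqrt. apply sqrt_le_1_alt.
  (* |c - w|^2 <= |1 - c w|^2  iff  (1 - c^2) (1 - |w|^2) >= 0 *)
  assert (0 <= (1 - c ^ 2) * (1 - Re w ^ 2 - Im w ^ 2)) by (apply Rmult_le_pos; nra).
  destruct w as [p q]. simpl in *. nra.
Qed.

Lemma extremal_in_B gamma c : 0 <= gamma < 1 -> 0 <= c < 1 -> in_B gamma (extremal gamma c).
Proof.
  intros Hg Hc. split; intros z HO; pose proof (Cmod_disk_map gamma z Hg HO) as Hw.
  - apply ex_derive_C_NormedModule. unfold extremal, blaschke, Cdiv.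
    apply (ex_derive_Cmult (fun z => RtoC c - disk_map gamma z)%C).
    + apply (ex_derive_minus (K := C_AbsRing) (V := C_module) (fun _ => _) (disk_map gamma));
        [apply ex_derive_const | apply ex_derive_disk_map].
    + apply (ex_derive_Cinv (fun z => 1 - RtoC c * disk_map gamma z)%C);
        [|exact (C_one_sub_neq_0 _ (Cmod_RtoC_mult_lt_1 c _ Hc Hw))].
      apply (ex_derive_minus (K := C_AbsRing) (V := C_module) (fun _ => _)
               (fun z => RtoC c * disk_map gamma z)%C); [apply ex_derive_const|].
      apply (ex_derive_Cmult (fun _ => _)); [apply ex_derive_const | apply ex_derive_disk_map].
  - apply Cmod_blaschke_le; assumption.
Qed.

Lemma Cmod_pow_n (q : C) n : Cmod (pow_n (K := C_Ring) q n) = Cmod q ^ n.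
Proof.
  induction n as [|n IHn]; [apply Cmod_1|].
  change (pow_n (K := C_Ring) q (S n)) with (q * pow_n (K := C_Ring) q n)%C.
  rewrite Cmod_mult, IHn. reflexivity.
Qed.

Lemma pow_n_RtoC_mult (r : R) (w : C) n :
  pow_n (K := C_Ring) (RtoC r * w)%C n = (RtoC (r ^ n) * pow_n (K := C_Ring) w n)%C.
Proof.
  induction n as [|n IHn].
  - change (RtoC 1 = RtoC (r ^ 0) * RtoC 1)%C. simpl pow. ring.
  - change ((RtoC r * w) * pow_n (K := C_Ring) (RtoC r * w)%C n
            = RtoC (r ^ S n) * (w * pow_n (K := C_Ring) w n))%C.
    rewrite IHn. simpl pow. rewrite RtoC_mult. ring.
Qed.

Lemma is_series_C_geom (q : C) : Cmod q < 1 ->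
  is_series (V := C_NormedModule) (pow_n (K := C_Ring) q) (/ (1 - q))%C.
Proof.
  intros Hq.
  assert (H1q := C_one_sub_neq_0 q Hq).
  assert (Hm : 0 < Cmod (1 - q)%C) by (apply Cmod_gt_0, H1q).
  assert (Hpartial : forall n,
    sum_n (pow_n (K := C_Ring) q) n = ((1 - pow_n (K := C_Ring) q (S n)) / (1 - q))%C).
  { induction n as [|n IHn].
    - rewrite sum_O. change (RtoC 1 = (1 - q * RtoC 1) / (1 - q))%C. field. exact H1q.
    - rewrite sum_Sn, IHn.
      change ((1 - pow_n (K := C_Ring) q (S n)) / (1 - q) + pow_n (K := C_Ring) q (S n)
              = (1 - q * pow_n (K := C_Ring) q (S n)) / (1 - q))%C.
      field. exact H1q. }
  intros P [eps HP].
  destruct (pow_lt_1_zero (Cmod q) ltac:(rewrite Rabs_pos_eq; [lra | apply Cmod_ge_0])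
              (eps * Cmod (1 - q)%C)) as [N HN]; [apply Rmult_lt_0_compat; [apply cond_pos | lra]|].
  exists N. intros n Hn. apply HP, C_NormedModule_mixin_compat1.
  change (minus ?a ?b) with (a - b)%C. rewrite Hpartial.
  replace ((1 - pow_n (K := C_Ring) q (S n)) / (1 - q) - / (1 - q))%C
    with (- pow_n (K := C_Ring) q (S n) / (1 - q))%C by (field; exact H1q).
  rewrite Cmod_div, Cmod_opp, Cmod_pow_n by exact H1q.
  specialize (HN (S n) ltac:(lia)). rewrite Rabs_pos_eq in HN by (apply pow_le, Cmod_ge_0).
  apply Rlt_div_l; lra.
Qed.

Definition blaschke_coef (c : R) (n : nat) : R :=
  match n with O => c | S m => - (1 - c ^ 2) * c ^ m end.

Lemma is_series_blaschke (c : R) (w : C) : 0 <= c < 1 -> Cmod w < 1 ->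
  is_series (V := C_NormedModule)
    (fun n => (RtoC (blaschke_coef c n) * pow_n (K := C_Ring) w n)%C) (blaschke c w).
Proof.
  intros Hc Hw.
  assert (Hcw := Cmod_RtoC_mult_lt_1 c w Hc Hw).
  assert (Hnz := C_one_sub_neq_0 _ Hcw).
  apply is_series_decr_1.
  assert (G := is_series_C_geom _ Hcw).
  apply (is_series_scal_l (V := C_NormedModule) (RtoC (- (1 - c ^ 2)) * w)%C) in G.
  match goal with |- is_series _ ?l =>
    replace l with (RtoC (- (1 - c ^ 2)) * w * / (1 - RtoC c * w))%C end.
  2: { change (RtoC (- (1 - c ^ 2)) * w * / (1 - RtoC c * w) = blaschke c w - RtoC c * RtoC 1)%C.
       unfold blaschke. rewrite RtoC_opp, RtoC_minus, RtoC_pow. field. exact Hnz. }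
  eapply is_series_ext; [|exact G].
  intros n.
  change (RtoC (- (1 - c ^ 2)) * w * pow_n (K := C_Ring) (RtoC c * w) n
          = RtoC (- (1 - c ^ 2) * c ^ n) * (w * pow_n (K := C_Ring) w n))%C.
  rewrite pow_n_RtoC_mult, RtoC_mult. ring.
Qed.

Definition extremal_coef (gamma c : R) (n : nat) : C := RtoC (blaschke_coef c n * (1 - gamma) ^ n).

Lemma extremal_has_expansion gamma c : 0 <= gamma < 1 -> 0 <= c < 1 ->
  has_expansion gamma (extremal gamma c) (extremal_coef gamma c).
Proof.
  intros Hg Hc z HO.
  eapply is_series_ext;
    [|apply (is_series_blaschke c (disk_map gamma z) Hc (Cmod_disk_map gamma z Hg HO))].
  intros n. unfold disk_map, extremal_coef. rewrite pow_n_RtoC_mult, RtoC_mult.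
  change (@eq _ ?u ?v) with (@eq C u v). ring.
Qed.

Lemma sum_scaled_extremal_coef gamma c n : 0 <= gamma < 1 -> 0 < c < 1 ->
  sum_f_R0 (fun k => Cmod (extremal_coef gamma c k) / (1 - gamma) ^ k) n
  = c + (1 + c) * (1 - c ^ n).
Proof.
  intros Hg Hc.
  assert (Hcoef : forall k,
    Cmod (extremal_coef gamma c k) / (1 - gamma) ^ k = Rabs (blaschke_coef c k)).
  { intros k. assert (0 < (1 - gamma) ^ k) by (apply pow_lt; lra).
    unfold extremal_coef. rewrite Cmod_R, Rabs_mult, (Rabs_pos_eq ((1 - gamma) ^ k)) by lra.
    field. lra. }
  induction n as [|n IHn]; simpl sum_f_R0; rewrite Hcoef.
  - simpl. rewrite Rabs_pos_eq; lra.
  - rewrite IHn. simpl blaschke_coef. rewrite Rabs_left1.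
    + simpl. ring.
    + assert (0 <= c ^ n) by (apply pow_le; lra). assert (0 < 1 - c ^ 2) by nra. nra.
Qed.

Lemma is_series_Cf_extremal gamma c rho : 0 <= gamma < 1 -> 0 < c < 1 -> 0 < rho < 1 ->
  is_series (Cf_term gamma (extremal_coef gamma c) rho)
    ((1 + 2 * c) * log_bound rho - (1 + c) * log_bound (c * rho)).
Proof.
  intros Hg Hc Hr.
  eapply is_series_ext; [|apply (is_series_minus (V := R_NormedModule));
    apply (is_series_scal_l (V := R_NormedModule)), is_series_log_bound; nra].
  intros n. unfold Cf_term. rewrite sum_scaled_extremal_coef, Rpow_mult_distr by assumption.
  change (scal ?a ?b) with (a * b). change (plus ?a (opp ?b)) with (a - b).
  change (@eq _ ?u ?v) with (@eq R u v). field. apply not_0_INR. lia.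
Qed.

Lemma pow_1_sub_le_second_order d n : 0 <= d <= 1 ->
  (1 - d) ^ n <= 1 - INR n * d + INR n * (INR n - 1) / 2 * d ^ 2.
Proof.
  intros Hd. induction n as [|n IHn]; [simpl; lra|].
  rewrite S_INR. simpl pow.
  assert (H1 : (1 - d) * (1 - d) ^ n <= (1 - d) * (1 - INR n * d + INR n * (INR n - 1) / 2 * d ^ 2))
    by (apply Rmult_le_compat_l; lra).
  assert (Hn : 0 <= INR n * (INR n - 1)).
  { destruct n; [simpl; lra|]. rewrite S_INR. pose proof (pos_INR n). nra. }
  assert (0 <= INR n * (INR n - 1) / 2 * d ^ 3) by (apply Rmult_le_pos; [lra | apply pow_le; lra]).
  simpl in *. nra.
Qed.

Lemma extremal_gap_lower d n : 0 < d <= 1 / 2 ->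
  (2 * INR n - 1) * d - INR n ^ 2 * d ^ 2 <= 2 * (1 - d) - (2 - d) * (1 - d) ^ n.
Proof.
  intros Hd. pose proof (pow_1_sub_le_second_order d n ltac:(lra)) as B.
  set (m := INR n) in *.
  assert (H1 : (2 - d) * (1 - d) ^ n <= (2 - d) * (1 - m * d + m * (m - 1) / 2 * d ^ 2))
    by (apply Rmult_le_compat_l; lra).
  assert (0 <= m * (m - 1) / 2 * d ^ 3).
  { apply Rmult_le_pos; [|apply pow_le; lra]. unfold m.
    destruct n; [simpl; lra|]. rewrite S_INR. pose proof (pos_INR n). nra. }
  simpl in *. nra.
Qed.

Lemma Cf_term_extremal_gap gamma rho d n : 0 <= gamma < 1 -> 0 <= rho -> 0 < d <= 1 / 2 ->
  d * (2 * rho ^ n - 3 * (rho ^ n / INR (n + 1))) - d ^ 2 * (INR (n + 1) * rho ^ n)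
  <= Cf_term gamma (extremal_coef gamma (1 - d)) rho n - rho ^ n / INR (n + 1).
Proof.
  intros Hg Hr Hd.
  unfold Cf_term. rewrite sum_scaled_extremal_coef by lra.
  pose proof (extremal_gap_lower d n Hd) as Hgap.
  assert (Hp : 0 <= rho ^ n) by (apply pow_le; lra).
  rewrite plus_INR. simpl INR. set (m := INR n) in *.
  assert (Hm : 0 <= m) by apply pos_INR.
  replace (/ (m + 1) * (1 - d + (1 + (1 - d)) * (1 - (1 - d) ^ n)) * rho ^ n - rho ^ n / (m + 1))
    with (rho ^ n / (m + 1) * (2 * (1 - d) - (2 - d) * (1 - d) ^ n)) by (field; lra).
  assert (H1 : rho ^ n / (m + 1) * ((2 * m - 1) * d - m ^ 2 * d ^ 2)
               <= rho ^ n / (m + 1) * (2 * (1 - d) - (2 - d) * (1 - d) ^ n))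
    by (apply Rmult_le_compat_l; [apply Rdiv_le_0_compat|]; lra).
  assert (H2 : rho ^ n * d ^ 2 * (m ^ 2 / (m + 1)) <= rho ^ n * d ^ 2 * (m + 1)).
  { apply Rmult_le_compat_l; [apply Rmult_le_pos; [lra | apply pow_le; lra]|].
    apply Rle_div_l; lra. }
  replace (rho ^ n / (m + 1) * ((2 * m - 1) * d - m ^ 2 * d ^ 2))
    with (d * (2 * rho ^ n - 3 * (rho ^ n / (m + 1))) - rho ^ n * d ^ 2 * (m ^ 2 / (m + 1)))
    in H1 by (field; lra).
  lra.
Qed.

Lemma Cf_extremal_gap gamma rho d : 0 <= gamma < 1 -> 0 < rho < 1 -> 0 < d <= 1 / 2 ->
  d * (2 / (1 - rho) - 3 * log_bound rho) - d ^ 2 * Series (fun n => INR (n + 1) * rho ^ n)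
  <= Cf gamma (extremal_coef gamma (1 - d)) rho - log_bound rho.
Proof.
  intros Hg Hr Hd.
  assert (HCf := is_series_Cf_extremal gamma (1 - d) rho Hg ltac:(lra) Hr).
  assert (HL := is_series_log_bound rho Hr).
  assert (Hgeo : is_series (fun n => rho ^ n) (/ (1 - rho)))
    by (apply is_series_geom; rewrite Rabs_pos_eq; lra).
  assert (HS2 := Series_correct _ (ex_series_succ_mul_pow rho ltac:(lra))).
  apply (is_series_le _ _ _ _ (fun n => Cf_term_extremal_gap gamma rho d n Hg ltac:(lra) Hd)).
  - apply (is_series_minus (V := R_NormedModule)); apply (is_series_scal_l (V := R_NormedModule));
      [|exact HS2].
    apply (is_series_minus (V := R_NormedModule)); apply (is_series_scal_l (V := R_NormedModule));
      [|exact HL].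
    replace (2 / (1 - rho)) with (2 * / (1 - rho)) by (unfold Rdiv; ring).
    exact Hgeo.
  - unfold Cf. rewrite (is_series_unique _ _ HCf).
    apply (is_series_minus (V := R_NormedModule)); assumption.
Qed.

Lemma exists_Cf_gt_log_bound (gamma rho0 rho : R) :
  0 <= gamma < 1 -> 0 < rho0 -> critical rho0 = 0 -> rho0 < rho < 1 ->
  exists (f : C -> C) (a : nat -> C),
    in_B gamma f /\ has_expansion gamma f a /\
    ex_series (Cf_term gamma a rho) /\ Cf gamma a rho > log_bound rho.
Proof.
  intros Hg H0 Hc0 Hr.
  set (gap := 2 / (1 - rho) - 3 * log_bound rho).
  assert (Hgap : 0 < gap).
  { pose proof (critical_increasing rho0 rho H0 ltac:(lra) ltac:(lra)).
    pose proof (log_bound_critical rho ltac:(lra)).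
    assert (0 < critical rho / (1 - rho)) by (apply Rdiv_lt_0_compat; lra).
    unfold gap, Rdiv in *. lra. }
  set (S2 := Series (fun n => INR (n + 1) * rho ^ n)).
  set (d := Rmin (1 / 2) (gap / (2 * (Rabs S2 + 1)))).
  assert (HS2 : 0 <= Rabs S2) by apply Rabs_pos.
  assert (Hd : 0 < d <= 1 / 2).
  { split; [apply Rmin_pos; [lra | apply Rdiv_lt_0_compat; lra] | apply Rmin_l]. }
  assert (Hdgap : d * (Rabs S2 + 1) <= gap / 2).
  { apply (Rmult_le_reg_r (/ (Rabs S2 + 1))); [apply Rinv_0_lt_compat; lra|].
    rewrite Rmult_assoc, Rinv_r, Rmult_1_r by lra.
    replace (gap / 2 * / (Rabs S2 + 1)) with (gap / (2 * (Rabs S2 + 1))) by (field; lra).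
    apply Rmin_r. }
  exists (extremal gamma (1 - d)), (extremal_coef gamma (1 - d)).
  split; [apply extremal_in_B; lra|].
  split; [apply extremal_has_expansion; lra|].
  split; [eexists; apply is_series_Cf_extremal; lra|].
  pose proof (Cf_extremal_gap gamma rho d Hg ltac:(lra) Hd) as Hlow. fold gap S2 in Hlow.
  pose proof (Rle_abs S2).
  assert (d ^ 2 * S2 <= d * (gap / 2)) by (simpl; nra).
  apply Rlt_gt. nra.
Qed.

Theorem theorem1 (gamma rho0 : R) :
  0 <= gamma < 1 ->
  0 < rho0 < 1 ->
  3 * (1 - rho0) * ln (1 - rho0) + 2 * rho0 = 0 ->
  (forall (f : C -> C) (a : nat -> C),
      in_B gamma f -> has_expansion gamma f a ->
      forall rho, 0 < rho <= rho0 ->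
        ex_series (Cf_term gamma a rho) /\ Cf gamma a rho <= log_bound rho) /\
  (forall rho, rho0 < rho < 1 ->
      exists (f : C -> C) (a : nat -> C),
        in_B gamma f /\ has_expansion gamma f a /\
        ex_series (Cf_term gamma a rho) /\ Cf gamma a rho > log_bound rho).
Proof.
  intros Hg [Hrho0 Hrho1] Heq.
  assert (Hc0 := critical_root rho0 Hrho0 Heq).
  split.
  - intros f a HB Hexp rho Hr. exact (Cf_le_log_bound gamma rho0 f a rho Hg Hrho1 Hc0 HB Hexp Hr).
  - intros rho Hr. exact (exists_Cf_gt_log_bound gamma rho0 rho Hg Hrho0 Hc0 Hr).
Qed.
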